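(* Let $p\in(0,1)$, $\beta>0$, $\mu_P,\mu_N\in\mathbb R^d$ with $\mu_{pn}:=\mu_P-\mu_N\neq 0$, and let $\Sigma_P$ be symmetric positive semidefinite and $\Sigma_N$ symmetric positive definite $d\times d$ matrices. Let $\pi(\alpha)=\sqrt{(1-\alpha)/\alpha}$ for $\alpha\in(0,1)$ and $Q_F(\alpha_P,\alpha_N)=\frac{(1-p)\alpha_N+\beta^2p\alpha_P}{1-\alpha_P}$. Consider sequences generated as follows (the alternating descent scheme of the MPMF algorithm): start with $w_1=\mu_{pn}/\|\mu_{pn}\|$; at round $t$, given a unit vector $w_t$ with $C_t:=w_t^T\mu_{pn}>0$, set $A_t=\sqrt{w_t^T\Sigma_P w_t}$, $B_t=\sqrt{w_t^T\Sigma_N w_t}$, and let $(\alpha_{P,t},\alpha_{N,t})$ be a minimizer of $Q_F(\alpha_P,\alpha_N)$ over $\{(\alpha_P,\alpha_N)\in(0,1)^2:\ \pi(\alpha_N)B_t+\pi(\alpha_P)A_t=C_t\}$ (assumed to exist); set $\tau_t=\pi(\alpha_{P,t})$, $\lambda_t(w)=\frac{w^T\mu_{pn}-\tau_t\sqrt{w^T\Sigma_P w}}{\sqrt{w^T\Sigma_N w}}$, $\eta_t=\lambda_t(w_t)$, and choose a unit vector $w_{t+1}$ with $\lambda_t(w_{t+1})\ge\eta_t$ (either $w_{t+1}=w_t$, or a unit vector with $f_t(w_{t+1})\ge 0$ where $f_t(w)=w^T\mu_{pn}-\tau_t\sqrt{w^T\Sigma_P w}-\eta_t\sqrt{w^T\Sigma_N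 w}$). Then the sequence of objective values $Q_F(\alpha_{P,t},\alpha_{N,t})$ is monotonically non-increasing in $t$ and converges.
   Context: This is the minimax probability machine for the $F_\beta$ measure (MPMF): the problem is $\min_{\alpha_P,\alpha_N,w} \frac{(1-p)\alpha_N+\beta^2p\alpha_P}{1-\alpha_P}$ subject to $\|w\|=1$ and $\pi(\alpha_N)\sqrt{w^T\Sigma_N w}+\pi(\alpha_P)\sqrt{w^T\Sigma_P w}=w^T\mu_{pn}$, where $\mu_P,\Sigma_P$ ($\mu_N,\Sigma_N$) are the mean and covariance of the positive (negative) class, $p$ the positive class proportion, and $\alpha_P,\alpha_N$ worst-case false negative and false positive rates. The algorithm alternates between minimizing over $(\alpha_P,\alpha_N)$ for fixed $w$ and, for fixed $\alpha_P$, improving $w$ so as to decrease $\alpha_N$ (the new value being $\alpha_{N,t}'=1/(1+\lambda_t(w_{t+1})^2)$). *)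

From HB Require Import structures.
From mathcomp Require Import all_boot all_order all_algebra.
From mathcomp Require Import all_classical all_reals all_analysis.
Set Implicit Arguments. Unset Strict Implicit. Unset Printing Implicit Defensive.
Import Order.TTheory GRing.Theory Num.Theory numFieldNormedType.Exports.
Local Open Scope ring_scope.

Section MPMF.
Variables (R : realType) (d : nat).

Definition dotv (u v : 'cV[R]_d) : R := (u^T *m v) 0 0.
Definition enorm (u : 'cV[R]_d) : R := Num.sqrt (dotv u u).
Definition qform (S : 'M[R]_d) (w : 'cV[R]_d) : R := (w^T *m S *m w) 0 0.

Definition symmetric_mx (S : 'M[R]_d) : Prop := S^T = S.
Definition psd_mx (S : 'M[R]_d) : Prop :=
  symmetric_mx S /\ forall x : 'cV[R]_d, 0 <= qform S x.
Definition pd_mx (S : 'M[R]_d) : Prop :=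
  symmetric_mx S /\ forall x : 'cV[R]_d, x != 0 -> 0 < qform S x.
End MPMF.

Definition piF {R : realType} (a : R) : R := Num.sqrt ((1 - a) / a).

Definition QF {R : realType} (p beta aP aN : R) : R :=
  ((1 - p) * aN + beta ^+ 2 * p * aP) / (1 - aP).

(* feasible set at round t with A = sqrt(w^T SP w), B = sqrt(w^T SN w), C = w^T mu *)
Definition feasible {R : realType} (A B C aP aN : R) : Prop :=
  0 < aP < 1 /\ 0 < aN < 1 /\ piF aN * B + piF aP * A = C.

Definition is_minimizer {R : realType} (p beta A B C aP aN : R) : Prop :=
  feasible A B C aP aN /\
  forall bP bN, feasible A B C bP bN -> QF p beta aP aN <= QF p beta bP bN.

Definition lambdaF {R : realType} {d : nat} (SP SN : 'M[R]_d) (mu : 'cV[R]_d)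
  (tau : R) (w : 'cV[R]_d) : R :=
  (dotv w mu - tau * Num.sqrt (qform SP w)) / Num.sqrt (qform SN w).

From HB Require Import structures.
From mathcomp Require Import all_boot all_order all_algebra.
From mathcomp Require Import all_classical all_reals all_analysis.
From mathcomp Require Import ring lra.
Set Implicit Arguments. Unset Strict Implicit. Unset Printing Implicit Defensive.
Import Order.TTheory GRing.Theory Num.Theory numFieldNormedType.Exports.
Local Open Scope ring_scope.

(* On the feasible set of round t the ratio eta_t = lambda_t(w_t) equals
   pi(alpha_{N,t}).  Keeping alpha_{P,t} fixed, the point
   (alpha_{P,t}, pi^-1(lambda_t(w_{t+1}))) is feasible for round t+1, and since
   pi is decreasing and lambda_t(w_{t+1}) >= eta_t its second coordinate is at
   most alpha_{N,t}; as Q_F is increasing in alpha_N, the minimum of round t+1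
   is at most that of round t.  The values are nonnegative, so the
   nonincreasing sequence converges. *)

Section PiF.
Variable R : realType.
Implicit Types a x : R.

Lemma piF_gt0 a : 0 < a < 1 -> 0 < piF a.
Proof. by move=> /andP[a0 a1]; rewrite /piF sqrtr_gt0 divr_gt0 //; lra. Qed.

Lemma piFK a : 0 < a < 1 -> (1 + piF a ^+ 2)^-1 = a.
Proof.
move=> /andP[a0 a1]; rewrite /piF sqr_sqrtr; last by rewrite divr_ge0 //; lra.
suff -> : 1 + (1 - a) / a = a^-1 by rewrite invrK.
by field; rewrite lt0r_neq0.
Qed.

Lemma piF_invDsqr x : 0 <= x -> piF (1 + x ^+ 2)^-1 = x.
Proof.
move=> x0; have Dx_gt0 : 0 < 1 + x ^+ 2 by rewrite ltr_pwDl // sqr_ge0.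
rewrite /piF invrK mulrBl mul1r mulVf ?gt_eqF // addrAC subrr add0r.
by rewrite sqrtr_sqr ger0_norm.
Qed.

Lemma invDsqr_le a x : 0 < a < 1 -> piF a <= x -> (1 + x ^+ 2)^-1 <= a.
Proof.
move=> a01 le_ax; rewrite -[leRHS](piFK a01).
have pa_gt0 := piF_gt0 a01; have x_gt0 := lt_le_trans pa_gt0 le_ax.
rewrite lef_pV2 ?posrE ?ltr_pwDl ?sqr_ge0 ?exprn_gt0 //.
by rewrite lerD2l ler_sqr ?nnegrE ?(ltW pa_gt0) ?(ltW x_gt0).
Qed.

End PiF.

Section Feasibility.
Variable R : realType.
Implicit Types A B C aP aN : R.

Lemma feasible_slack A B C aP aN : 0 < B ->
  feasible A B C aP aN -> (C - piF aP * A) / B = piF aN.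
Proof. by move=> B_gt0 [_ [_ <-]]; rewrite addrK mulfK ?gt_eqF. Qed.

Lemma feasible_of_slack A B C aP : 0 < B -> 0 < aP < 1 ->
  let lam := (C - piF aP * A) / B in
  0 < lam -> feasible A B C aP (1 + lam ^+ 2)^-1.
Proof.
move=> B_gt0 aP01 lam lam_gt0; split=> //; split.
  have Dlam_gt0 : 0 < 1 + lam ^+ 2 by rewrite ltr_pwDl // sqr_ge0.
  by rewrite invr_gt0 Dlam_gt0 invf_lt1 // ltrDl exprn_gt0.
by rewrite piF_invDsqr ?ltW // /lam mulfVK ?gt_eqF // subrK.
Qed.

End Feasibility.

Section Objective.
Variables (R : realType) (p beta : R).

Lemma le_QF_aN aP x y : p < 1 -> aP < 1 -> x <= y ->
  QF p beta aP x <= QF p beta aP y.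
Proof.
move=> p1 aP1 le_xy; apply: ler_wpM2r; first by rewrite invr_ge0 subr_ge0 ltW.
by rewrite lerD2r ler_wpM2l // subr_ge0 ltW.
Qed.

Lemma QF_ge0 aP aN : 0 < p < 1 -> 0 < aP < 1 -> 0 < aN < 1 ->
  0 <= QF p beta aP aN.
Proof.
move=> /andP[p0 p1] /andP[aP0 aP1] /andP[aN0 _].
apply: divr_ge0; last by rewrite subr_ge0 ltW.
apply: addr_ge0; first by rewrite mulr_ge0 ?subr_ge0 ?(ltW p1) ?(ltW aN0).
by rewrite mulr_ge0 ?(ltW aP0) // mulr_ge0 ?sqr_ge0 ?(ltW p0).
Qed.

Lemma minimizer_step A B C A' B' C' aP aN aP' aN' :
  p < 1 -> 0 < B -> 0 < B' ->
  is_minimizer p beta A B C aP aN -> is_minimizer p beta A' B' C' aP' aN' ->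
  (C - piF aP * A) / B <= (C' - piF aP * A') / B' ->
  QF p beta aP' aN' <= QF p beta aP aN.
Proof.
move=> p1 B_gt0 B'_gt0 [feas _] [_ min'] le_slack.
have [aP01 [aN01 _]] := feas.
rewrite (feasible_slack B_gt0 feas) in le_slack.
have slack'_gt0 := lt_le_trans (piF_gt0 aN01) le_slack.
apply: le_trans (min' _ _ (feasible_of_slack B'_gt0 aP01 slack'_gt0)) _.
have /andP[_ aP1] := aP01.
exact: le_QF_aN p1 aP1 (invDsqr_le aN01 le_slack).
Qed.

End Objective.

Lemma enorm0 (R : realType) (d : nat) : enorm (0 : 'cV[R]_d) = 0.
Proof. by rewrite /enorm /dotv trmx0 mul0mx mxE sqrtr0. Qed.

Lemma pd_sqrt_qform_gt0 (R : realType) (d : nat) (S : 'M[R]_d) (w : 'cV[R]_d) :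
  pd_mx S -> w != 0 -> 0 < Num.sqrt (qform S w).
Proof. by move=> [_ S_pd] w_neq0; rewrite sqrtr_gt0 S_pd. Qed.

Theorem theorem1 (R : realType) (d : nat) (p beta : R)
  (muP muN : 'cV[R]_d) (SP SN : 'M[R]_d)
  (w : nat -> 'cV[R]_d) (aP aN : nat -> R) :
  0 < p < 1 -> 0 < beta ->
  muP - muN != 0 ->
  psd_mx SP -> pd_mx SN ->
  (* w_1 = mu_pn / ||mu_pn|| (rounds indexed from 0) *)
  w 0%N = (enorm (muP - muN))^-1 *: (muP - muN) ->
  (* every w_t is a unit vector *)
  (forall t, enorm (w t) = 1) ->
  (* (aP t, aN t) minimizes Q_F over the feasible set determined by w_t *)
  (forall t, is_minimizer p beta
     (Num.sqrt (qform SP (w t))) (Num.sqrt (qform SN (w t)))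
     (dotv (w t) (muP - muN)) (aP t) (aN t)) ->
  (* update step: lambda_t(w_{t+1}) >= eta_t = lambda_t(w_t) *)
  (forall t, lambdaF SP SN (muP - muN) (piF (aP t)) (w t.+1) >=
             lambdaF SP SN (muP - muN) (piF (aP t)) (w t)) ->
  (forall t, QF p beta (aP t.+1) (aN t.+1) <= QF p beta (aP t) (aN t)) /\
  cvgn (fun t => QF p beta (aP t) (aN t)).
Proof.
move=> p01 _ _ _ SN_pd _ w_unit w_min w_step.
have B_gt0 t : 0 < Num.sqrt (qform SN (w t)).
  apply: pd_sqrt_qform_gt0 => //; apply/eqP => w0.
  by move: (w_unit t); rewrite w0 enorm0 => /eqP; rewrite eq_sym oner_eq0.
have QF_step t : QF p beta (aP t.+1) (aN t.+1) <= QF p beta (aP t) (aN t).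
  have /andP[_ p1] := p01.
  exact: minimizer_step p1 (B_gt0 t) (B_gt0 t.+1) (w_min t) (w_min t.+1) (w_step t).
split=> //; apply: nonincreasing_is_cvgn; first exact/nonincreasing_seqP.
exists 0 => _ [t _ <-]; have [[aP01 [aN01 _]] _] := w_min t.
exact: QF_ge0.
Qed.
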